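(* In the setting described in the context, for every $c_1^*\in\arg\min_{c'\in[K]\setminus\{c^*\}} P_1(c')$ we have $P_1(c_1^* )=P_2(c_1^* )$.
   Context: Let $N_p\ge 1$ and $K\ge 2$ be integers, and write $[m]=\{1,\dots,m\}$. Let real numbers $\rho_i^c$ be given for $i\in[N_p]$ and $c\in[K]$. A vote configuration is a matrix $\tilde V=(\tilde v_i^c)\in\{0,1\}^{N_p\times K}$ with $\sum_{c=1}^K \tilde v_i^c=1$ for every $i\in[N_p]$. Its cost is $O(\tilde V)=\sum_{i=1}^{N_p}\sum_{c=1}^K \rho_i^c\,\tilde v_i^c$. Let $\mathrm{majVote}(\tilde V)$ denote the smallest index among the maximizers of $c\mapsto \sum_{i=1}^{N_p}\tilde v_i^c$. Fix a class $c^*\in[K]$. For $c'\in[K]$ define: - $P_1(c')=\min\{O(\tilde V): \tilde V \text{ a vote configuration with } \sum_{i=1}^{N_p}(\tilde v_i^{c'}-\tilde v_i^{c})\ge \mathbf 1_{c<c'}\ \forall c\in[K]\setminus\{c'\}\}$. The constraint is equivalent to $\mathrm{majVote}(\tilde V)=c'$. - $P_2(c')=\min\{O(\tilde V): \tilde V \text{ a vote configuration with } \sum_{i=1}^{N_p}(\tilde v_i^{c'}-\tilde v_i^{c^*})\ge \mathbf 1_{c^*<c'}\}$. Here $\mathbf 1_{a<b}$ equals $1$ if $a<b$ and $0$ otherwise. *)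

From HB Require Import structures.
From mathcomp Require Import all_boot all_order all_algebra.
Set Implicit Arguments. Unset Strict Implicit. Unset Printing Implicit Defensive.
Import Order.TTheory GRing.Theory Num.Theory.
Local Open Scope ring_scope.

Section VoteDefs.
Variables (R : realFieldType) (Np K : nat).
Variable rho : 'I_Np -> 'I_K -> R.

Definition vote_config (V : 'M[bool]_(Np, K)) : bool :=
  [forall i, (\sum_(c < K) (V i c : nat))%N == 1%N].

Definition votes (V : 'M[bool]_(Np, K)) (c : 'I_K) : nat :=
  (\sum_(i < Np) (V i c : nat))%N.

Definition cost (V : 'M[bool]_(Np, K)) : R :=
  \sum_(i < Np) \sum_(c < K) rho i c * ((V i c : nat)%:R).

Definition feas1 (c' : 'I_K) : pred 'M[bool]_(Np, K) :=
  fun V => vote_config V &&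
    [forall c, (c != c') ==>
       ((((c < c')%N : nat)%:Z) <= (votes V c')%:Z - (votes V c)%:Z)].

Definition feas2 (cstar c' : 'I_K) : pred 'M[bool]_(Np, K) :=
  fun V => vote_config V &&
    ((((cstar < c')%N : nat)%:Z) <= (votes V c')%:Z - (votes V cstar)%:Z).

(* minimum of the cost over a (finite) feasible set; the default point is
   irrelevant whenever the feasible set is nonempty (always the case here). *)
Definition min_cost (S : pred 'M[bool]_(Np, K)) : R :=
  cost (Order.arg_min (const_mx false) S cost).

Definition P1 (c' : 'I_K) : R := min_cost (feas1 c').
Definition P2 (cstar c' : 'I_K) : R := min_cost (feas2 cstar c').
End VoteDefs.

From HB Require Import structures.
From mathcomp Require Import all_boot all_order all_algebra.
From mathcomp Require Import zify.
Import Order.TTheory GRing.Theory Num.Theory.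
Local Open Scope ring_scope.

(* The constraint of P2 only pits c1 against c^*, so every P1-feasible
   configuration for c1 is P2-feasible and P2(c1) <= P1(c1).  Conversely, an
   optimal configuration for P2(c1) has a majority vote c' different from c^*
   since c1 beats or ties c^* with the tie broken against c^*; so it is
   feasible for P1(c'), whence P1(c1) <= P1(c') <= P2(c1) by minimality of
   c1. *)

Lemma arg_min_default_irrelevant {I : finType} {d} {T : orderType d}
    (i0 j : I) (P : pred I) (F : I -> T) :
  P j -> Order.arg_min i0 P F = Order.arg_min j P F.
Proof.
move=> Pj; rewrite /Order.arg_min /extremum; case: pickP => [//|noP].
case: (Order.TotalTheory.arg_minP F Pj) => i Pi min_i; exfalso.
move: (noP i); rewrite /= Pi /= => /negbT/negP; apply.
by apply/forallP => k; apply/implyP => Pk; exact: min_i.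
Qed.

Section MinCost.
Context {R : realFieldType} {Np K : nat} (rho : 'I_Np -> 'I_K -> R).
Implicit Types (S : pred 'M[bool]_(Np, K)) (V : 'M[bool]_(Np, K)).

Lemma min_costP {S V0} : S V0 ->
  exists2 A, S A & min_cost rho S = cost rho A /\
                   forall V, S V -> cost rho A <= cost rho V.
Proof.
move=> SV0; rewrite /min_cost (arg_min_default_irrelevant _ _ _ _ SV0).
by case: (Order.TotalTheory.arg_minP (cost rho) SV0) => A SA minA; exists A.
Qed.

Lemma min_cost_le {S V} : S V -> min_cost rho S <= cost rho V.
Proof. by move=> SV; have [A _ [-> minA]] := min_costP SV; exact: minA. Qed.

Lemma min_cost_sub {S1 S2 V0} : (forall V, S1 V -> S2 V) -> S1 V0 ->
  min_cost rho S2 <= min_cost rho S1.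
Proof.
move=> sub12 S1V0; have [A S1A [-> _]] := min_costP S1V0.
exact/min_cost_le/sub12.
Qed.

End MinCost.

Section MajorityVote.
Context {Np K : nat}.
Implicit Types (V : 'M[bool]_(Np, K)) (c : 'I_K).

(* The smallest index among the maximizers of [votes V]; [c0] only witnesses
   that ['I_K] is inhabited. *)
Definition maj_vote V c0 : 'I_K :=
  let cmax := [arg max_(c > c0) votes V c] in
  [arg min_(c < cmax | votes V c == votes V cmax) (c : nat)].

Lemma maj_vote_max V c0 c : (votes V c <= votes V (maj_vote V c0))%N.
Proof.
rewrite /maj_vote; case: arg_maxnP => // cmax _ max_cmax.
by case: arg_minnP => // m /eqP -> _; exact: max_cmax.
Qed.

Lemma maj_vote_first V c0 c : (c < maj_vote V c0)%N ->
  (votes V c < votes V (maj_vote V c0))%N.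
Proof.
move=> lt_c; rewrite ltn_neqAle maj_vote_max andbT; apply/eqP => eq_votes.
move: lt_c eq_votes; rewrite /maj_vote.
case: arg_maxnP => // cmax _ _; case: arg_minnP => // m /eqP -> min_m.
move=> lt_c /eqP eq_votes.
by move: (min_m c eq_votes); rewrite leqNgt lt_c.
Qed.

Lemma feas1_maj_vote V c0 : vote_config V -> feas1 (maj_vote V c0) V.
Proof.
move=> V_config; rewrite /feas1 /= V_config.
apply/forallP => c; apply/implyP => _.
have := maj_vote_max V c0 c; case: ltnP => [/(maj_vote_first V) | _]; lia.
Qed.

Lemma maj_vote_neq V cstar c1 :
  c1 != cstar ->
  ((((cstar < c1)%N : nat)%:Z) <= (votes V c1)%:Z - (votes V cstar)%:Z) ->
  maj_vote V c1 != cstar.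
Proof.
move=> c1_neq; apply: contraTneq => maj_eq; move: (maj_vote_max V c1 c1).
rewrite maj_eq; case: (ltngtP cstar c1) => [_ | lt_c1 | /val_inj eq_c]; try lia.
- by move: (maj_vote_first V c1 c1); rewrite maj_eq => /(_ lt_c1); lia.
- by rewrite eq_c eqxx in c1_neq.
Qed.

Definition unanimous_vote c : 'M[bool]_(Np, K) := \matrix_(i, j) (j == c).

Lemma votes_unanimous c d :
  votes (unanimous_vote c) d = if d == c then Np else 0%N.
Proof.
rewrite /votes; under eq_bigr => i _ do rewrite mxE.
by case: eqP => _ /=; [rewrite sum_nat_const card_ord muln1 | rewrite big1].
Qed.

Lemma unanimous_vote_config c : vote_config (unanimous_vote c).
Proof.
apply/forallP => i; rewrite (bigD1 c) //= mxE eqxx big1 //.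
by move=> j /negbTE j_neq; rewrite mxE j_neq.
Qed.

Lemma feas1_unanimous c : (0 < Np)%N -> feas1 c (unanimous_vote c).
Proof.
move=> Np_gt0; rewrite /feas1 unanimous_vote_config.
apply/forallP => d; apply/implyP => d_neq.
by rewrite !votes_unanimous eqxx (negbTE d_neq); case: ltnP; lia.
Qed.

Lemma feas1_sub_feas2 cstar c1 : c1 != cstar ->
  forall V : 'M[bool]_(Np, K), feas1 c1 V -> feas2 cstar c1 V.
Proof.
move=> c1_neq V /andP[V_config /forallP beats]; rewrite /feas2 /= V_config /=.
by move: (beats cstar); rewrite eq_sym c1_neq.
Qed.

End MajorityVote.

Theorem lemma1p2 (R : realFieldType) (Np K : nat)
  (hNp : (1 <= Np)%N) (hK : (2 <= K)%N)
  (rho : 'I_Np -> 'I_K -> R) (cstar c1 : 'I_K) :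
  c1 != cstar ->
  (forall c : 'I_K, c != cstar -> P1 rho c1 <= P1 rho c) ->
  P1 rho c1 = P2 rho cstar c1.
Proof.
move=> c1_neq c1_min.
have feas1_c1 := feas1_unanimous c1 hNp.
have sub12 (V : 'M[bool]_(Np, K)) : feas1 c1 V -> feas2 cstar c1 V :=
  feas1_sub_feas2 _ _ c1_neq V.
have P2_le_P1 : P2 rho cstar c1 <= P1 rho c1 := min_cost_sub rho sub12 feas1_c1.
have [B /andP[B_config B_beats] [P2_eq _]] := min_costP rho (sub12 _ feas1_c1).
have P1_le_P2 : P1 rho c1 <= P2 rho cstar c1.
  have maj_B_neq := maj_vote_neq B _ _ c1_neq B_beats.
  rewrite /P2 P2_eq; apply: le_trans (c1_min _ maj_B_neq) _.
  exact/min_cost_le/feas1_maj_vote.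
by apply/eqP; rewrite eq_le P1_le_P2 P2_le_P1.
Qed.
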